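(* Let $\Omega=\{\rho<0\}\subset\mathbb{C}^n$, $n\ge2$, be a strongly convex domain with $0\in\partial\Omega$ whose $C^3$ defining function has near $0$ the form $$\rho(z)=2\,\mathrm{Re}(z_n)+\sum_{j,k=1}^nA_{jk}z_j\bar z_k+O(|z|^3)$$ with the Hermitian form $\sum A_{jk}z_j\bar z_k$ positive definite. Then there exist constants $c,\varepsilon_0>0$ such that for $0<\eta,\varepsilon<\varepsilon_0$: $$D^e(0,\eta,\varepsilon)\subset D_0(c\eta,c\varepsilon),\qquad D_0(\eta,\varepsilon)\subset D^e(0,c\eta,c\varepsilon).$$
   Context: $D_0(\eta,\varepsilon)=\{\tau\in\mathbb{C}^n\setminus\Omega:|\tau_1|^2+\dots+|\tau_{n-1}|^2<\eta\,\mathrm{Re}(\tau_n),\ |\mathrm{Im}(\tau_n)|<\eta\,\mathrm{Re}(\tau_n),\ |\mathrm{Re}(\tau_n)|<\varepsilon\}$. External Korányi region: with $\langle\partial\rho(\xi),w\rangle=\sum_k\frac{\partial\rho}{\partial\xi_k}(\xi)w_k$, $n(\xi)=\bar\partial\rho(\xi)/|\bar\partial\rho(\xi)|$, $T_\xi=\{w:\langle\partial\rho(\xi),\xi-w\rangle=0\}$, and $\tau=w+t\,n(\xi)$ the unique decomposition with $w\in T_\xi$, $t\in\mathbb{C}$, $D^e(\xi,\eta,\varepsilon)=\{\tau\in\mathbb{C}^n\setminus\Omega:|w-\xi|<\sqrt{\eta\rho(\tau)},\ |\mathrm{Im}\,t|<\eta\rho(\tau),\ \rho(\tau)<\varepsilon\}$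 (for $\xi=0$ here: $w=(\tau_1,\dots,\tau_{n-1},0)$, $t=\tau_n$). *)

From HB Require Import structures.
From mathcomp Require Import all_boot all_order all_algebra.
From mathcomp Require Import all_classical all_reals all_analysis.
From mathcomp Require Import complex.
Set Implicit Arguments. Unset Strict Implicit. Unset Printing Implicit Defensive.
Import Order.TTheory GRing.Theory Num.Theory.
Import numFieldNormedType.Exports.
Local Open Scope ring_scope.
Local Open Scope classical_set_scope.

Section Defs.
Variables (R : realType) (n : nat).

(* C^n, realised as the real normed space R^n x R^n : z = (x, y), z_j = x_j + i y_j *)
Definition Cn := ('rV[R]_n * 'rV[R]_n)%type.

(* j-th complex coordinate (0-based: the paper's z_{j+1}) *)
Definition zc (z : Cn) (j : 'I_n) : R[i] := Complex (z.1 0 j) (z.2 0 j).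
(* coordinate by a nat index k (0 if k >= n); the paper's z_n is zk z n.-1 *)
Definition zk (z : Cn) (k : nat) : R[i] := oapp (zc z) 0 (insub k).
Definition mkCn (f : 'I_n -> R[i]) : Cn :=
  (\row_j complex.Re (f j), \row_j complex.Im (f j)).

Definition cabs2 (w : R[i]) : R := complex.Re w ^+ 2 + complex.Im w ^+ 2.
Definition enorm (z : Cn) : R := Num.sqrt (\sum_j cabs2 (zc z j)).

Definition herm (A : 'M[R[i]]_n) (z : Cn) : R[i] :=
  \sum_j \sum_k A j k * zc z j * conjc (zc z k).
Definition is_hermitian (A : 'M[R[i]]_n) := forall j k, A j k = conjc (A k j).
Definition posdef_herm (A : 'M[R[i]]_n) :=
  forall z : Cn, z != 0 -> 0 < complex.Re (herm A z).

Fixpoint Ck (k : nat) (f : Cn -> R) : Prop :=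
  match k with
  | 0 => continuous f
  | k.+1 => (forall x v : Cn, derivable f x v) /\
            (forall v : Cn, Ck k (fun x => 'D_v f x))
  end.

Definition ex (j : 'I_n) : Cn := mkCn (fun k => if k == j then 1 else 0).
Definition ey (j : 'I_n) : Cn := mkCn (fun k => if k == j then Complex 0 1 else 0).
(* Wirtinger derivatives d rho / d z_k and d rho / d zbar_k *)
Definition dz (rho : Cn -> R) (xi : Cn) (k : 'I_n) : R[i] :=
  Complex ('D_(ex k) rho xi / 2) (- ('D_(ey k) rho xi / 2)).
Definition dzb (rho : Cn -> R) (xi : Cn) (k : 'I_n) : R[i] := conjc (dz rho xi k).
Definition pair_drho (rho : Cn -> R) (xi w : Cn) : R[i] :=
  \sum_k dz rho xi k * zc w k.
Definition norm_dzb (rho : Cn -> R) (xi : Cn) : R :=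
  Num.sqrt (\sum_k cabs2 (dzb rho xi k)).
Definition nvec (rho : Cn -> R) (xi : Cn) : Cn :=
  mkCn (fun k => dzb rho xi k / (norm_dzb rho xi)%:C%C).
(* decomposition tau = w + t n(xi), w in T_xi = {w | <d rho(xi), xi - w> = 0}:
   t = <d rho(xi), tau - xi> / <d rho(xi), n(xi)>,  w = tau - t n(xi) *)
Definition tdec (rho : Cn -> R) (xi tau : Cn) : R[i] :=
  pair_drho rho xi (tau - xi) / pair_drho rho xi (nvec rho xi).
Definition wdec (rho : Cn -> R) (xi tau : Cn) : Cn :=
  tau - mkCn (fun k => tdec rho xi tau * zc (nvec rho xi) k).

Definition Omega (rho : Cn -> R) : set Cn := [set z | rho z < 0].

Definition D0 (rho : Cn -> R) (eta eps : R) : set Cn :=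
  [set tau | ~ Omega rho tau /\
     \sum_(k < n.-1) cabs2 (zk tau k) < eta * complex.Re (zk tau n.-1) /\
     `|complex.Im (zk tau n.-1)| < eta * complex.Re (zk tau n.-1) /\
     `|complex.Re (zk tau n.-1)| < eps].

Definition De (rho : Cn -> R) (xi : Cn) (eta eps : R) : set Cn :=
  [set tau | ~ Omega rho tau /\
     enorm (wdec rho xi tau - xi) < Num.sqrt (eta * rho tau) /\
     `|complex.Im (tdec rho xi tau)| < eta * rho tau /\
     rho tau < eps].

Definition strongly_convex_domain (rho : Cn -> R) :=
  [/\ connected (Omega rho),
      (exists B : R, forall z, Omega rho z -> enorm z <= B),
      (forall p, rho p = 0 -> exists v, 'D_v rho p != 0) &
      (forall p v, rho p = 0 -> v != 0 -> 'D_v rho p = 0 ->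
                   0 < 'D_v ('D_v rho) p)].
End Defs.

From HB Require Import structures.
From mathcomp Require Import all_boot all_order all_algebra.
From mathcomp Require Import all_classical all_reals all_analysis.
From mathcomp Require Import complex.
From mathcomp Require Import ring lra.
Import Order.TTheory GRing.Theory Num.Theory.
Import numFieldNormedType.Exports.
Local Open Scope ring_scope.
Local Open Scope classical_set_scope.
Set Implicit Arguments.
Unset Strict Implicit.

(* Up to an error O(|z|^2) the defining function is 2 Re z_n.  Hence its
   differential at 0 is 2 dx_n, the normal n(0) is e_n and the splitting
   tau = w + t n(0) is just tau = (tau', 0) + tau_n e_n, so both regions are cut
   out by |tau'|^2, Im tau_n and one of rho(tau), Re tau_n.  On either region
   |tau|^2 is at most a small multiple of Re tau_n, resp. of rho(tau), so the
   quadratic error keeps rho(tau) and 2 Re tau_n comparable, which gives both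
   inclusions with c = 3. *)

Section EuclideanNorm.
Variables (R : realType) (n : nat).
Implicit Types (z v : Cn R n).

Lemma zcZ (h : R) z j : zc (h *: z) j = Complex (h * z.1 0 j) (h * z.2 0 j).
Proof. by rewrite /zc /= !mxE. Qed.

Lemma zcB z v j : zc (z - v) j = zc z j - zc v j.
Proof. by rewrite /zc /= !mxE. Qed.

Lemma zc_mkCn (f : 'I_n -> R[i]) j : zc (mkCn f) j = f j.
Proof. by rewrite /zc /mkCn /= !mxE; case: (f j). Qed.

Lemma cabs2_ge0 (w : R[i]) : 0 <= cabs2 w.
Proof. by rewrite /cabs2 addr_ge0 // sqr_ge0. Qed.

Lemma sum_cabs2_ge0 I (r : seq I) (P : pred I) (F : I -> R[i]) :
  0 <= \sum_(i <- r | P i) cabs2 (F i).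
Proof. by rewrite sumr_ge0 // => *; exact: cabs2_ge0. Qed.

Lemma enorm_ge0 z : 0 <= enorm z.
Proof. exact: sqrtr_ge0. Qed.

Lemma enormZ (h : R) z : enorm (h *: z) = `|h| * enorm z.
Proof.
rewrite /enorm.
under eq_bigr => j _ do rewrite zcZ /cabs2 /= !exprMn -mulrDr.
by rewrite -mulr_sumr sqrtrM ?sqr_ge0 // sqrtr_sqr.
Qed.

Lemma normr_coord_le_enorm z j : `|z.1 0 j| <= enorm z /\ `|z.2 0 j| <= enorm z.
Proof.
have le_sum : cabs2 (zc z j) <= \sum_k cabs2 (zc z k).
  by rewrite (bigD1 j) //= lerDl sum_cabs2_ge0.
have [le_Re le_Im] : z.1 0 j ^+ 2 <= cabs2 (zc z j) /\ z.2 0 j ^+ 2 <= cabs2 (zc z j).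
  by rewrite /cabs2 /= lerDl lerDr !sqr_ge0.
rewrite /enorm -!sqrtr_sqr; split; rewrite ler_sqrt ?sum_cabs2_ge0 //;
  exact: le_trans le_sum.
Qed.

Lemma derive0_quadratic_approx (f L : Cn R n -> R) (K r : R) : 0 < r ->
  f 0 = 0 -> (forall (h : R) v, L (h *: v) = h * L v) ->
  (forall z, enorm z < r -> `|f z - L z| <= K * enorm z ^+ 2) ->
  forall v, 'D_v f 0 = L v.
Proof.
move=> r0 f0 LZ fb v; rewrite /derive; apply: cvg_lim => //.
apply/cvgrPdist_le => e e0.
set E := enorm v.
have E0 : 0 <= E := enorm_ge0 v.
have d0 : 0 < Order.min (r / (E + 1)) (e / (`|K| * E ^+ 2 + 1)).
  by rewrite lt_min !divr_gt0 // ?ltr_wpDl ?mulr_ge0 ?sqr_ge0.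
near=> h.
have hn0 : h != 0 by near: h; exact: nbhs_dnbhs_neq.
have hd : `|h| < Order.min (r / (E + 1)) (e / (`|K| * E ^+ 2 + 1)).
  by near: h; exact: dnbhs0_lt.
rewrite /= !addr0 f0 subr0.
have hp : 0 < `|h| by rewrite normr_gt0.
move: hd; rewrite lt_min => /andP [h1 h2].
have hE : enorm (h *: v) < r.
  rewrite enormZ; move: h1; rewrite ltr_pdivlMr ?ltr_wpDl // => h1.
  by apply: le_lt_trans h1; rewrite ler_wpM2l // lerDl.
have := fb _ hE; rewrite LZ enormZ => hb.
have -> : L v - h^-1 *: f (h *: v) = h^-1 * (h * L v - f (h *: v)).
  by rewrite mulrBr mulKf.
rewrite normrM normfV distrC ler_pdivrMl //.
apply: le_trans hb _.
rewrite exprMn mulrA (mulrC K) -mulrA expr2 -mulrA ler_wpM2l //.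
move: h2; rewrite ltr_pdivlMr; last by rewrite ltr_wpDl ?mulr_ge0 ?sqr_ge0.
move=> h2; apply: le_trans (ltW h2).
rewrite mulrDr mulr1 -[X in X <= _]addr0 lerD //.
by rewrite ler_wpM2l // ler_wpM2r ?sqr_ge0 // ler_norm.
Unshelve. all: by end_near.
Qed.

Lemma Re_sum I (r : seq I) (P : pred I) (F : I -> R[i]) :
  complex.Re (\sum_(i <- r | P i) F i) = \sum_(i <- r | P i) complex.Re (F i).
Proof. by apply: (big_morph _ (fun x y => _)) => //; case=> ? ?; case. Qed.

Lemma normr_Re_herm_term (a1 a2 w1 w2 u1 u2 E : R) :
  `|w1| <= E -> `|w2| <= E -> `|u1| <= E -> `|u2| <= E ->
  `|a1 * (w1 * u1 + w2 * u2) + a2 * (w1 * u2 - w2 * u1)| <=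
    2 * (`|a1| + `|a2|) * E ^+ 2.
Proof.
move=> h1 h2 h3 h4.
have le_prod x y : `|x| <= E -> `|y| <= E -> `|x * y| <= E ^+ 2.
  by move=> hx hy; rewrite normrM expr2 ler_pM.
apply: le_trans (ler_normD _ _) _.
rewrite !normrM mulrDr mulrDl.
have split2 t : 2 * t * E ^+ 2 = t * (E ^+ 2 + E ^+ 2) by ring.
apply: lerD; rewrite split2 ler_wpM2l //.
  by apply: le_trans (ler_normD _ _) _; rewrite lerD // le_prod.
by apply: le_trans (ler_normB _ _) _; rewrite lerD // le_prod.
Qed.

Lemma normr_Re_herm_le (A : 'M[R[i]]_n) : exists KA : R, 0 <= KA /\
  forall z, `|complex.Re (herm A z)| <= KA * enorm z ^+ 2.
Proof.
exists (\sum_j \sum_k 2 * (`|complex.Re (A j k)| + `|complex.Im (A j k)|)).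
split; first by rewrite !sumr_ge0 // => *; rewrite !sumr_ge0 // => *;
  rewrite mulr_ge0 ?addr_ge0.
move=> z; rewrite /herm Re_sum mulr_suml.
apply: le_trans (ler_norm_sum _ _ _) _; apply: ler_sum => j _.
rewrite Re_sum mulr_suml.
apply: le_trans (ler_norm_sum _ _ _) _; apply: ler_sum => k _.
have [h1 h2] := normr_coord_le_enorm z j.
have [h3 h4] := normr_coord_le_enorm z k.
move: h1 h2 h3 h4; rewrite /zc; case: (A j k) => a1 a2 /=.
set w1 := z.1 0 j; set w2 := z.2 0 j; set u1 := z.1 0 k; set u2 := z.2 0 k.
have -> : (a1 * w1 - a2 * w2) * u1 - (a1 * w2 + a2 * w1) * - u2 =
   a1 * (w1 * u1 + w2 * u2) + a2 * (w1 * u2 - w2 * u1) by ring.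
exact: normr_Re_herm_term.
Qed.

Lemma quadratic_remainder_of_cubic (rho : Cn R n -> R) (A : 'M[R[i]]_n) (M r : R) :
  0 < r -> (forall z, enorm z < r ->
     `|rho z - (2 * complex.Re (zk z n.-1) + complex.Re (herm A z))|
       <= M * enorm z ^+ 3) ->
  exists K rb : R, [/\ 0 < K, 0 < rb & forall z, enorm z < rb ->
    `|rho z - 2 * complex.Re (zk z n.-1)| <= K * enorm z ^+ 2].
Proof.
move=> r0 hM; have [KA [KA0 hKA]] := normr_Re_herm_le A.
exists (`|M| + KA + 1), (Order.min r 1); split.
- by rewrite ltr_wpDl ?addr_ge0.
- by rewrite lt_min r0 ltr01.
move=> z; rewrite lt_min => /andP [hr h1].
have := hM z hr; have := hKA z; have E0 := enorm_ge0 z.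
set E := enorm z; set H := complex.Re (herm A z); set x := complex.Re _.
move=> hH hR.
have hM3 : M * E ^+ 3 <= `|M| * E ^+ 2.
  apply: le_trans (_ : `|M| * E ^+ 3 <= _).
    by rewrite ler_wpM2r ?exprn_ge0 // ler_norm.
  by rewrite ler_wpM2l // exprS ler_piMl ?exprn_ge0 // ltW.
have -> : rho z - 2 * x = (rho z - (2 * x + H)) + H by ring.
apply: le_trans (ler_normD _ _) _.
have : 0 <= E ^+ 2 by rewrite exprn_ge0.
lra.
Qed.
End EuclideanNorm.

Section ConeBounds.
Variable R : realType.

Lemma small_radius_exists (K r : R) : 0 < K -> 0 < r ->
  exists e : R, [/\ 0 < e, e <= 1, 2 * e <= r & 8 * K * e <= 1].
Proof.
move=> K0 r0; have K8 : 0 < 8 * K by rewrite mulr_gt0.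
exists (Order.min (Order.min 1 (r / 2)) (1 / (8 * K))); split.
- by rewrite !lt_min ltr01 !divr_gt0.
- by rewrite !ge_min lexx.
- by rewrite -ler_pdivlMl // mulrC !ge_min lexx orbT.
- by rewrite -ler_pdivlMl // mulr1 ge_min mul1r lexx orbT.
Qed.

(* [S] stands for |tau'|^2, [x + i y] for tau_n and [t] for rho(tau). *)
Lemma cone_of_koranyi_bounds (K eps0 eta eps x y S t : R) :
  0 < K -> 0 < eps0 -> eps0 <= 1 -> 8 * K * eps0 <= 1 ->
  0 < eta -> eta < eps0 -> 0 < eps -> eps < eps0 ->
  0 <= S -> 0 < t -> `|x| < eps0 ->
  S < eta * t -> `|y| < eta * t -> t < eps ->
  `|t - 2 * x| <= K * (S + x ^+ 2 + y ^+ 2) ->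
  [/\ S < 3 * eta * x, `|y| < 3 * eta * x & `|x| < 3 * eps].
Proof.
move=> K0 e0 e1 eK et0 et1 ep0 ep1 S0 t0 hx hS hy ht hb.
have y2 : y ^+ 2 <= (eta * t) ^+ 2.
  by move: hy; rewrite ltr_norml => /andP [? ?]; nra.
have x2 : K * x ^+ 2 <= `|x| / 8.
  have ax : 0 <= `|x| by [].
  have kx : K * `|x| <= 1 / 8 by nra.
  rewrite -real_normK ?num_real //; nra.
have b1 : K * eta <= 1 / 8 by nra.
have b2 : K * S <= t / 8 by nra.
have b3 : eta * t <= 1 by nra.
have b4 : K * (eta * t) ^+ 2 <= t / 8 by nra.
have hE2 : K * (S + x ^+ 2 + y ^+ 2) <= t / 4 + `|x| / 8 by nra.
move: hb; rewrite ler_norml => /andP [h1 h2].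
have x0 : 0 < x.
  case: (ltrP 0 x) => // hx0.
  by move: x2 hE2; rewrite ler0_norm //; nra.
move: x2 hE2; rewrite gtr0_norm // => x2 hE2.
move: hy; rewrite ltr_norml => /andP [hy1 hy2].
split; first by nra.
  by rewrite ltr_norml; apply/andP; split; nra.
by nra.
Qed.

Lemma koranyi_of_cone_bounds (K r eps0 eta eps x y S t : R) :
  0 < K -> 0 < eps0 -> eps0 <= 1 -> 2 * eps0 <= r -> 8 * K * eps0 <= 1 ->
  0 < eta -> eta < eps0 -> 0 < eps -> eps < eps0 ->
  0 <= S -> 0 <= t ->
  S < eta * x -> `|y| < eta * x -> `|x| < eps ->
  (S + x ^+ 2 + y ^+ 2 < r ^+ 2 -> `|t - 2 * x| <= K * (S + x ^+ 2 + y ^+ 2)) ->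
  [/\ S < 3 * eta * t, `|y| < 3 * eta * t & t < 3 * eps].
Proof.
move=> K0 e0 e1 er eK et0 et1 ep0 ep1 S0 t0 hS hy hx hb.
have x0 : 0 < x by nra.
move: hx; rewrite ltr_norml => /andP [_ hx].
have y2 : y ^+ 2 <= (eta * x) ^+ 2.
  by move: hy; rewrite ltr_norml => /andP [? ?]; nra.
have a1 : eta * x <= eps0 * x by nra.
have a2 : eta * x <= 1 by nra.
have a3 : (eta * x) ^+ 2 <= eta * x by nra.
have a4 : x ^+ 2 <= eps0 * x by nra.
have hE2 : S + x ^+ 2 + y ^+ 2 <= 3 * eps0 * x by nra.
have hr : S + x ^+ 2 + y ^+ 2 < r ^+ 2 by nra.
move: (hb hr); rewrite ler_norml => /andP [h1 h2].
have h3 : K * (S + x ^+ 2 + y ^+ 2) <= x * (3 / 8) by nra.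
move: hy; rewrite ltr_norml => /andP [hy1 hy2].
split; first by nra.
  by rewrite ltr_norml; apply/andP; split; nra.
by nra.
Qed.
End ConeBounds.

Section LastCoordinate.
Variables (R : realType) (m : nat).
Local Notation N := m.+2.
Implicit Types (z v : Cn R N).

Lemma zk_last z : zk z m.+1 = zc z ord_max.
Proof. by rewrite /zk insubT //= => ?; congr zc; apply: val_inj. Qed.

Lemma zk_widen z (k : 'I_m.+1) : zk z k = zc z (widen_ord (leqnSn _) k).
Proof.
rewrite /zk insubT /=; first by rewrite (leq_trans (ltn_ord k)).
by move=> ?; congr zc; apply: val_inj.
Qed.

Definition tangent_norm2 z := \sum_(k < m.+1) cabs2 (zk z k).

Lemma enorm_sqr_split z : enorm z ^+ 2 = tangent_norm2 z + cabs2 (zc z ord_max).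
Proof.
rewrite /enorm sqr_sqrtr ?sum_cabs2_ge0 // big_ord_recr /tangent_norm2.
by congr (_ + _); apply: eq_bigr => k _; rewrite zk_widen.
Qed.

Definition delta_last (k : 'I_N) : R[i] := if k == ord_max then 1 else 0.

Section NormalDecompositionAtOrigin.
Variable rho : Cn R N -> R.
Hypothesis D_rho0 : forall v, 'D_v rho 0 = 2 * v.1 0 ord_max.

Lemma dz_rho0 k : dz rho 0 k = delta_last k.
Proof.
rewrite /dz !D_rho0 /ex /ey /mkCn /= !mxE /delta_last eq_sym.
by case: (k == ord_max); apply/eqP;
  rewrite eq_complex /= ?mulr1 ?mulr0 ?mul0r ?oppr0 ?eqxx ?andbT ?divff.
Qed.

Lemma norm_dzb_rho0 : norm_dzb rho 0 = 1.
Proof.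
rewrite /norm_dzb (bigD1 ord_max) //= big1 ?addr0.
  by rewrite /dzb dz_rho0 /delta_last eqxx /cabs2 /= oppr0 expr1n expr0n addr0 sqrtr1.
by move=> k /negbTE hk; rewrite /dzb dz_rho0 /delta_last hk /cabs2 /= oppr0 expr0n addr0.
Qed.

Lemma nvec_rho0 : nvec rho 0 = mkCn delta_last.
Proof.
rewrite /nvec norm_dzb_rho0; congr mkCn; apply: funext => k.
by rewrite /dzb dz_rho0 divr1 /delta_last;
  case: (k == ord_max); apply/eqP; rewrite eq_complex /= oppr0 !eqxx.
Qed.

Lemma pair_drho_rho0 w : pair_drho rho 0 w = zc w ord_max.
Proof.
rewrite /pair_drho (bigD1 ord_max) //= big1 ?addr0.
  by rewrite dz_rho0 /delta_last eqxx mul1r.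
by move=> k /negbTE hk; rewrite dz_rho0 /delta_last hk mul0r.
Qed.

Lemma tdec_rho0 tau : tdec rho 0 tau = zc tau ord_max.
Proof.
by rewrite /tdec !pair_drho_rho0 subr0 nvec_rho0 zc_mkCn /delta_last eqxx divr1.
Qed.

Lemma zc_wdec_rho0 tau k :
  zc (wdec rho 0 tau) k = if k == ord_max then 0 else zc tau k.
Proof.
rewrite /wdec tdec_rho0 nvec_rho0 zcB !zc_mkCn /delta_last.
by case: eqP => [->|_]; rewrite ?mulr1 ?subrr ?mulr0 ?subr0.
Qed.

Lemma enorm_wdec_rho0 tau : enorm (wdec rho 0 tau - 0) = Num.sqrt (tangent_norm2 tau).
Proof.
rewrite subr0 /enorm big_ord_recr /= zc_wdec_rho0 eqxx.
rewrite [cabs2 0]/cabs2 /= expr0n addr0 addr0 /tangent_norm2.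
congr Num.sqrt; apply: eq_bigr => k _.
rewrite zk_widen zc_wdec_rho0 ifN //.
by rewrite -val_eqE /= neq_ltn ltn_ord.
Qed.
End NormalDecompositionAtOrigin.

Section Regions.
Variables (rho : Cn R N -> R) (K rb eps0 : R).
Hypotheses (rho0 : rho 0 = 0) (K_gt0 : 0 < K).
Hypothesis rho_quadratic : forall z, enorm z < rb ->
  `|rho z - 2 * complex.Re (zk z m.+1)| <= K * enorm z ^+ 2.
Hypotheses (eps0_gt0 : 0 < eps0) (eps0_le1 : eps0 <= 1).
Hypotheses (eps0_rb : 2 * eps0 <= rb) (eps0_K : 8 * K * eps0 <= 1).

Let eps0_le_rb : eps0 <= rb.
Proof. by have := eps0_gt0; have := eps0_rb; lra. Qed.

Let rb_gt0 : 0 < rb := lt_le_trans eps0_gt0 eps0_le_rb.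

Let rho_quadratic' z : enorm z < rb ->
  `|rho z - 2 * z.1 0 ord_max| <= K * enorm z ^+ 2.
Proof. by move=> /rho_quadratic; rewrite zk_last. Qed.

Let D_rho0 v : 'D_v rho 0 = 2 * v.1 0 ord_max.
Proof.
apply: (derive0_quadratic_approx (L := fun z => 2 * z.1 0 ord_max) rb_gt0 rho0 _
  rho_quadratic').
by move=> h u /=; rewrite mxE; ring.
Qed.

Let rho_quadratic_coord z : enorm z < rb ->
  `|rho z - 2 * z.1 0 ord_max| <=
    K * (tangent_norm2 z + z.1 0 ord_max ^+ 2 + z.2 0 ord_max ^+ 2).
Proof. by move=> /rho_quadratic'; rewrite enorm_sqr_split /cabs2 /= addrA. Qed.

Lemma De_sub_D0 eta eps : 0 < eta < eps0 -> 0 < eps < eps0 ->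
  De rho 0 eta eps `&` [set z | enorm z < eps0] `<=` D0 rho (3 * eta) (3 * eps).
Proof.
move=> /andP [et0 et1] /andP [ep0 ep1] tau [[nO [hw [hi hr]]] hn].
rewrite enorm_wdec_rho0 // in hw; rewrite tdec_rho0 // /= in hi.
have t0 : 0 < rho tau.
  have : 0 < Num.sqrt (eta * rho tau) := le_lt_trans (sqrtr_ge0 _) hw.
  by rewrite sqrtr_gt0 pmulr_rgt0.
rewrite ltr_sqrt ?mulr_gt0 // in hw.
have [hx _] := normr_coord_le_enorm tau ord_max.
have [c1 c2 c3] := cone_of_koranyi_bounds K_gt0 eps0_gt0 eps0_le1 eps0_K et0 et1
  ep0 ep1 (sum_cabs2_ge0 _ _ _) t0 (le_lt_trans hx hn) hw hi hr
  (rho_quadratic_coord (lt_le_trans hn eps0_le_rb)).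
by split=> //; rewrite zk_last /=; split.
Qed.

Lemma D0_sub_De eta eps : 0 < eta < eps0 -> 0 < eps < eps0 ->
  D0 rho eta eps `<=` De rho 0 (3 * eta) (3 * eps).
Proof.
move=> /andP [et0 et1] /andP [ep0 ep1] tau [nO [hS [hy hx]]].
rewrite /= zk_last /= in hS hy hx.
have t0 : 0 <= rho tau by rewrite leNgt; apply/negP.
have hb : tangent_norm2 tau + tau.1 0 ord_max ^+ 2 + tau.2 0 ord_max ^+ 2 < rb ^+ 2 ->
    `|rho tau - 2 * tau.1 0 ord_max| <=
      K * (tangent_norm2 tau + tau.1 0 ord_max ^+ 2 + tau.2 0 ord_max ^+ 2).
  move=> h; apply: rho_quadratic_coord.
  rewrite -(ltr_pXn2r (_ : (0 < 2)%N)) ?nnegrE ?enorm_ge0 ?(ltW rb_gt0) //.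
  by rewrite enorm_sqr_split /cabs2 /= addrA.
have [c1 c2 c3] := koranyi_of_cone_bounds K_gt0 eps0_gt0 eps0_le1 eps0_rb eps0_K
  et0 et1 ep0 ep1 (sum_cabs2_ge0 _ _ _) t0 hS hy hx hb.
split=> //; rewrite enorm_wdec_rho0 // tdec_rho0 //; split=> //.
by rewrite ltr_sqrt //; apply: le_lt_trans c1; exact: sum_cabs2_ge0.
Qed.
End Regions.
End LastCoordinate.

Unset Implicit Arguments.
Set Strict Implicit.

Theorem lemma6 (R : realType) (n : nat) (hn : (2 <= n)%N)
  (rho : Cn R n -> R) (A : 'M[complex R]_n) :
  Ck 3 rho ->
  strongly_convex_domain rho ->
  rho 0 = 0 ->
  is_hermitian A -> posdef_herm A ->
  (exists M r : R, 0 < r /\ forall z : Cn R n, enorm z < r ->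
     `|rho z - (2 * complex.Re (zk z n.-1) + complex.Re (herm A z))|
       <= M * enorm z ^+ 3) ->
  exists c eps0 r : R, [/\ 0 < c, 0 < eps0, 0 < r &
    forall eta eps : R, 0 < eta < eps0 -> 0 < eps < eps0 ->
      (De rho 0 eta eps `&` [set z | enorm z < r] `<=` D0 rho (c * eta) (c * eps)) /\
      (D0 rho eta eps `<=` De rho 0 (c * eta) (c * eps))].
Proof.
case: n hn rho A => [|[|m]] // _ rho A _ _ rho0 _ _ [M [r [r0 hM]]].
have [K [rb [K0 rb0 hK]]] := quadratic_remainder_of_cubic r0 hM.
have [e [e0 e1 erb eK]] := small_radius_exists K0 rb0.
exists 3, e, e; split=> // eta eps heta heps; split.
- exact: De_sub_D0 rho0 K0 hK e0 e1 erb eK eta eps heta heps.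
- exact: D0_sub_De rho0 K0 hK e0 e1 erb eK eta eps heta heps.
Qed.
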